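(* Let $m,n,d,e$ be positive integers with $m=2n$ and $e=\gcd(n,d)=\gcd(m,d)$, and let $s\ge u\ge2$ be integers. Then \[|V_{s,u,\{0\}}|=2^{eu(u+1)/2}\prod_{i=0}^{u-1}(2^m-2^{ei}).\]
   Context: For integers $s\ge0$ and $u\ge1$, $V_{s,u}$ denotes the set of solutions $(x_1,\dots,x_{2u})\in\mathbb{F}_{2^m}^{2u}$ of the system \[\sum_{i=1}^u\big(x_{2i-1}x_{2i}^{2^{(\frac{n}{e}-j)d}}+x_{2i-1}^{2^{(\frac{n}{e}-j)d}}x_{2i}\big)=0,\qquad j=0,1,\dots,s.\] $V_{s,u,\{0\}}$ is the set of $(x_1,\dots,x_{2u})\in V_{s,u}$ such that $x_2,x_4,\dots,x_{2u}$ are linearly independent over $\mathbb{F}_{2^e}$. Equivalently, $\{(c_1,\dots,c_u)\in\mathbb{F}_{2^e}^u\mid\sum_i c_ix_{2i}=0\}=\{0\}$. *)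

From HB Require Import structures.
From mathcomp Require Import all_boot all_order all_algebra all_field.
From mathcomp Require Import zify.
Set Implicit Arguments. Unset Strict Implicit. Unset Printing Implicit Defensive.
Import GRing.Theory Num.Theory.
Local Open Scope ring_scope.

(* Frobenius power x |-> x^(2^k) on a field of order 2^m, for an integer k;
   since this automorphism has order dividing m, k is taken modulo m
   (for k >= 0 this is literally x^(2^k)). *)
Definition frob2 (F : finFieldType) (m : nat) (k : int) (x : F) : F :=
  x ^+ (2 ^ `|(k %% (m : int))%Z|%N)%N.

(* Coordinates of x = (x_1,...,x_{2u}) stored 0-based: x_{2i+1} is x (2i),
   x_{2i+2} is x (2i+1), for i < u. *)
Lemma ord_odd_lt (u : nat) (i : 'I_u) : (2 * i < 2 * u)%N.
Proof. have := ltn_ord i; lia. Qed.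
Lemma ord_even_lt (u : nat) (i : 'I_u) : (2 * i + 1 < 2 * u)%N.
Proof. have := ltn_ord i; lia. Qed.
Definition xodd (F : finFieldType) (u : nat) (x : {ffun 'I_(2 * u) -> F}) (i : 'I_u) : F :=
  x (Ordinal (ord_odd_lt i)).
Definition xeven (F : finFieldType) (u : nat) (x : {ffun 'I_(2 * u) -> F}) (i : 'I_u) : F :=
  x (Ordinal (ord_even_lt i)).

Definition inV (F : finFieldType) (m n d e s u : nat) (x : {ffun 'I_(2 * u) -> F}) : bool :=
  [forall j : 'I_s.+1,
    \sum_(i < u)
      (xodd x i * frob2 m ((((n %/ e)%N : int) - (j : int)) * (d : int)) (xeven x i)
       + frob2 m ((((n %/ e)%N : int) - (j : int)) * (d : int)) (xodd x i) * xeven x i) == 0].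

(* x_2, x_4, ..., x_{2u} linearly independent over the subfield F_{2^e}
   = { c in F | c^(2^e) = c }: the only (c_1..c_u) in F_{2^e}^u with
   sum_i c_i x_{2i} = 0 is 0. *)
Definition indep_sub (F : finFieldType) (e u : nat) (x : {ffun 'I_(2 * u) -> F}) : bool :=
  [forall c : {ffun 'I_u -> F},
    ([forall i, c i ^+ (2 ^ e)%N == c i] && (\sum_(i < u) c i * xeven x i == 0))
      ==> [forall i, c i == 0]].

Definition V0 (F : finFieldType) (m n d e s u : nat) : {set {ffun 'I_(2 * u) -> F}} :=
  [set x | inV m n d e s x && indep_sub e x].

From HB Require Import structures.
From mathcomp Require Import all_boot all_order all_algebra all_field.
From mathcomp Require Import zify ring.
Import GRing.Theory Num.Theory.
Set Implicit Arguments. Unset Strict Implicit. Unset Printing Implicit Defensive.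
Local Open Scope ring_scope.

Lemma card_pairs_dep (T1 T2 : finType) (P : pred T1) (Q : T1 -> pred T2) :
  #|[set p : T1 * T2 | P p.1 && Q p.1 p.2]| = (\sum_(a | P a) #|[set b | Q a b]|)%N.
Proof.
rewrite -sum1_card (eq_bigl (fun p => P p.1 && Q p.1 p.2)) => [|p]; last by rewrite inE.
rewrite -(pair_big_dep P Q (fun _ _ => 1%N)); apply: eq_bigr => a _.
by rewrite -sum1_card; apply: eq_bigl => b; rewrite inE.
Qed.

Section FixedField.
Variables (F : finFieldType) (sigma : {rmorphism F -> F}).

Definition fixed : {pred F} := [pred c | sigma c == c].

Lemma fixed_divring_closed : divring_closed fixed.
Proof.
split=> [|x y /eqP sx /eqP sy|x y /eqP sx /eqP sy]; rewrite !inE ?rmorph1 //.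
  by rewrite rmorphB sx sy.
by rewrite fmorph_div sx sy.
Qed.

HB.instance Definition _ := GRing.isDivringClosed.Build F fixed fixed_divring_closed.

Lemma fixedP c : reflect (sigma c = c) (c \in fixed).
Proof. exact: eqP. Qed.

Fact iter_is_nmod_morphism k : nmod_morphism (iter k sigma).
Proof.
by elim: k => [//|k [IH0 IHD]]; split=> [|x y]; rewrite /= ?IH0 ?IHD ?rmorph0 ?rmorphD.
Qed.

Fact iter_is_monoid_morphism k : monoid_morphism (iter k sigma).
Proof.
by elim: k => [//|k [IH1 IHM]]; split=> [|x y]; rewrite /= ?IH1 ?IHM ?rmorph1 ?rmorphM.
Qed.

HB.instance Definition _ k :=
  GRing.isNmodMorphism.Build F F (iter k sigma) (iter_is_nmod_morphism k).
HB.instance Definition _ k :=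
  GRing.isMonoidMorphism.Build F F (iter k sigma) (iter_is_monoid_morphism k).

Lemma iter_fixed k c : c \in fixed -> iter k sigma c = c.
Proof. by move=> /fixedP sc; elim: k => //= k ->. Qed.

Section Families.
Variable I : finType.
Implicit Types (S T Y : {set I}) (b : I -> F).

Definition free_fix S b : bool :=
  [forall c : {ffun I -> F},
    [forall p in S, c p \in fixed] && (\sum_(p in S) c p * b p == 0) ==>
    [forall p in S, c p == 0]].

Lemma free_fixP S b :
  reflect (forall c : I -> F, {in S, forall p, c p \in fixed} ->
             \sum_(p in S) c p * b p = 0 -> {in S, forall p, c p = 0})
          (free_fix S b).
Proof.
apply: (iffP forallP) => [freeS c cK c0 p pS | freeS c]; last first.
  apply/implyP => /andP[/forall_inP cK /eqP c0]; apply/forall_inP => p pS.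
  exact/eqP/(freeS c).
have /implyP cl := freeS [ffun q => c q].
suff /forall_inP/(_ p pS) : [forall q in S, [ffun q => c q] q == 0].
  by rewrite ffunE => /eqP.
apply: cl; apply/andP; split.
  by apply/forall_inP => q qS; rewrite ffunE cK.
by apply/eqP; rewrite -[RHS]c0; apply: eq_bigr => q _; rewrite ffunE.
Qed.


Lemma free_fixS S T b : T \subset S -> free_fix S b -> free_fix T b.
Proof.
move=> sTS /free_fixP freeS; apply/free_fixP => c cK c0 p pT.
pose cT q := if q \in T then c q else 0.
have -> : c p = cT p by rewrite /cT pT.
have cTK : {in S, forall q, cT q \in fixed}.
  by move=> q _; rewrite /cT; case: ifP => [/cK|]; rewrite ?rpred0.
suff cT0 : \sum_(q in S) cT q * b q = 0 by exact: freeS cTK cT0 p (subsetP sTS p pT).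
rewrite -[RHS]c0 (big_setID T) /= (setIidPr sTS) [X in _ + X]big1 ?addr0.
  by apply: eq_bigr => q qT; rewrite /cT qT.
by move=> q /setDP[_ /negbTE qT]; rewrite /cT qT mul0r.
Qed.

Lemma free_fix_coef_inj S b (c c' : I -> F) : free_fix S b ->
    {in S, forall p, c p \in fixed} -> {in S, forall p, c' p \in fixed} ->
    \sum_(p in S) c p * b p = \sum_(p in S) c' p * b p -> {in S, c =1 c'}.
Proof.
move=> /free_fixP freeS cK c'K Ec p pS; apply/eqP; rewrite -subr_eq0; apply/eqP.
move: p pS; apply: freeS => [q qS|]; first by rewrite rpredB ?cK ?c'K.
by under eq_bigr do rewrite mulrBl; rewrite sumrB Ec subrr.
Qed.

Definition span_fix S b : {set F} :=
  [set \sum_(p in S) c p * b p | c : {ffun I -> F} in ffun_on fixed].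

Lemma span_fixP S b x :
  reflect (exists2 c : I -> F, {in S, forall p, c p \in fixed} &
             x = \sum_(p in S) c p * b p)
          (x \in span_fix S b).
Proof.
apply: (iffP imsetP) => [[c /ffun_onP cK ->] | [c cK ->]]; first by exists c.
exists [ffun p => if p \in S then c p else 0].
  by apply/ffun_onP => p; rewrite ffunE; case: ifP => [/cK|]; rewrite ?rpred0.
by apply: eq_bigr => p pS; rewrite ffunE pS.
Qed.

Lemma free_fixU1 S b q : q \notin S ->
  free_fix (q |: S) b = free_fix S b && (b q \notin span_fix S b).
Proof.
move=> qS; have sSqS : S \subset q |: S by apply: subsetUr.
apply/idP/andP => [freeqS | [/free_fixP freeS bqS]].
  split; first exact: free_fixS freeqS.
  apply/span_fixP => -[c cK bqE].
  pose c' p := if p == q then -1 else c p.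
  have c'K : {in q |: S, forall p, c' p \in fixed}.
    move=> p /setU1P[->|pS]; rewrite /c' ?eqxx ?rpredN ?rpred1 //.
    by case: eqP => _; rewrite ?rpredN ?rpred1 ?cK.
  have c'0 : \sum_(p in q |: S) c' p * b p = 0.
    rewrite big_setU1 //= /c' eqxx mulN1r bqE addrC; apply/eqP.
    rewrite subr_eq0; apply/eqP; apply: eq_bigr => p pS.
    by case: eqP pS => [->|//]; rewrite (negbTE qS).
  have /eqP := free_fixP _ _ freeqS c' c'K c'0 q (setU11 _ _).
  by rewrite /c' eqxx oppr_eq0 oner_eq0.
apply/free_fixP => c cK; rewrite big_setU1 //= => c0.
have cq0 : c q = 0.
  apply: contraNeq bqS => cq; apply/span_fixP; exists (fun p => - c p / c q).
    by move=> p pS; rewrite rpredM ?rpredN ?rpredV ?cK ?setU11 // setU1r.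
  apply: (mulfI cq); rewrite mulr_sumr.
  have -> : c q * b q = - \sum_(p in S) c p * b p by apply/eqP; rewrite -addr_eq0 c0.
  rewrite -sumrN; apply: eq_bigr => p _.
  by rewrite mulrA mulrCA mulfV // mulr1 mulNr.
have cS : {in S, forall p, c p = 0}.
  apply: freeS => [p pS|]; first by rewrite cK ?setU1r.
  by rewrite -[RHS]c0 cq0 mul0r add0r.
by move=> p /setU1P[->|/cS].
Qed.


Let sum_delta S b q : q \in S -> \sum_(p in S) (p == q)%:R * b p = b q.
Proof.
move=> qS; rewrite (big_setD1 q) //= eqxx mul1r big1 ?addr0 //.
by move=> p /setD1P[/negbTE-> _]; rewrite mul0r.
Qed.

Lemma mem_span_fix S b q : q \in S -> b q \in span_fix S b.
Proof.
move=> qS; apply/span_fixP; exists (fun p => (p == q)%:R); last by rewrite sum_delta.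
by move=> p _; case: (p == q); rewrite ?rpred0 ?rpred1.
Qed.

Lemma card_span_fix b : free_fix setT b -> #|span_fix setT b| = (#|fixed| ^ #|I|)%N.
Proof.
move=> freeB; rewrite card_in_imset ?card_ffun_on //.
move=> c c' /ffun_onP cK /ffun_onP c'K Ec.
apply/ffunP => p.
by apply: (free_fix_coef_inj freeB (fun q _ => cK q) (fun q _ => c'K q) Ec); rewrite inE.
Qed.

Lemma free_fix_extend Y b : free_fix Y b ->
  exists2 S : {set I}, Y \subset S & free_fix S b /\ forall q, b q \in span_fix S b.
Proof.
move=> freeY; pose P S := (Y \subset S) && free_fix S b.
have PY : P Y by rewrite /P subxx.
case: (@arg_maxnP _ Y P (fun S => #|S|) PY) => S /andP[sYS freeS] maxS.
exists S => //; split=> // q; have [qS|qS] := boolP (q \in S); first exact: mem_span_fix.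
have : ~~ free_fix (q |: S) b.
  apply/negP => freeqS; have := maxS (q |: S).
  rewrite /P freeqS (subset_trans sYS (subsetUr _ _)) cardsU1 qS add1n.
  by move=> /(_ isT) /=; rewrite ltnn.
by rewrite free_fixU1 // freeS negbK.
Qed.


Lemma free_fix_coords Y b : free_fix Y b ->
  exists S, exists G : I -> I -> F,
    [/\ Y \subset S, free_fix S b,
        forall q, {in S, forall p, G q p \in fixed},
        forall q, b q = \sum_(p in S) G q p * b p &
        forall q, q \in S -> {in S, forall p, G q p = (p == q)%:R}].
Proof.
move=> /free_fix_extend[S sYS [freeS spanS]].
have /fin_all_exists2[G GK GE] := fun q => span_fixP S b (b q) (spanS q).
exists S, G; split=> // q qS; apply: (free_fix_coef_inj freeS) => //.
  by move=> p _; case: (p == q); rewrite ?rpred0 ?rpred1.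
by rewrite -GE sum_delta.
Qed.

Lemma free_fix_moore N k0 S (a b : I -> F) : (#|S| <= N)%N -> free_fix S b ->
    (forall k, (k0 <= k < k0 + N)%N -> \sum_(p in S) a p * iter k sigma (b p) = 0) ->
  {in S, forall p, a p = 0}.
Proof.
elim: N k0 S a => [|N IHN] k0 S a.
  by rewrite leqn0 cards_eq0 => /eqP-> _ _ p; rewrite inE.
move=> leSN freeS a0.
have [/forall_inP a_0 p /a_0/eqP //|/forall_inPn[p0 p0S ap0]] :=
  boolP [forall p in S, a p == 0].
pose a' p := a p / a p0.
have a'p0 : a' p0 = 1 by rewrite /a' divff.
have a'0 k : (k0 <= k < k0 + N.+1)%N -> \sum_(p in S) a' p * iter k sigma (b p) = 0.
  move=> /a0 ak; transitivity ((\sum_(p in S) a p * iter k sigma (b p)) / a p0).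
    by rewrite mulr_suml; apply: eq_bigr => p _; rewrite mulrAC.
  by rewrite ak mul0r.
pose c p := a' p - sigma (a' p).
have c0 k : (k0.+1 <= k < k0.+1 + N)%N -> \sum_(p in S :\ p0) c p * iter k sigma (b p) = 0.
  case: k => [//|k] /andP[lek0 ltk].
  have Ak1 : \sum_(p in S) a' p * iter k.+1 sigma (b p) = 0.
    by apply: a'0; apply/andP; split; lia.
  have Ak : \sum_(p in S) a' p * iter k sigma (b p) = 0.
    by apply: a'0; apply/andP; split; lia.
  transitivity (\sum_(p in S) a' p * iter k.+1 sigma (b p)
                - sigma (\sum_(p in S) a' p * iter k sigma (b p))).
    rewrite rmorph_sum -sumrB [RHS](big_setD1 p0) //= rmorphM a'p0 rmorph1 subrr add0r.
    by apply: eq_bigr => p _; rewrite rmorphM -mulrBl.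
  by rewrite Ak1 Ak rmorph0 subrr.
have a'K : {in S, forall p, a' p \in fixed}.
  move=> p pS; case: (eqVneq p p0) => [->|pp0]; first by rewrite a'p0 rpred1.
  apply/fixedP/eqP; rewrite eq_sym -subr_eq0; apply/eqP.
  apply: (IHN k0.+1 (S :\ p0) c) => //; last by rewrite !inE pp0.
    by move: leSN; rewrite (cardsD1 p0) p0S.
  by apply: free_fixS freeS; apply: subD1set.
have : \sum_(p in S) a' p * b p = 0.
  apply: (fmorph_inj (iter k0 sigma)); rewrite (rmorph0 (iter k0 sigma)) -[RHS](a'0 k0).
    rewrite rmorph_sum.
    by apply: eq_bigr => p pS; rewrite rmorphM; congr (_ * _); apply/iter_fixed/a'K.
  by apply/andP; split; lia.
by move=> /(free_fixP _ _ freeS a' a'K)/(_ p0 p0S)/eqP; rewrite a'p0 oner_eq0.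
Qed.

Lemma eq_free_fix S b b' : b =1 b' -> free_fix S b = free_fix S b'.
Proof.
by move=> Eb; apply/free_fixP/free_fixP => freeS c cK c0; apply: freeS => //;
  rewrite -[RHS]c0; apply: eq_bigr => p _; rewrite Eb.
Qed.

Lemma eq_span_fix S b b' : b =1 b' -> span_fix S b = span_fix S b'.
Proof.
by move=> Eb; apply: eq_imset => c; apply: eq_bigr => p _; rewrite Eb.
Qed.

End Families.

Section Reindex.
Variables (I J : finType) (h : J -> I) (g : I -> option J).
Hypothesis hK : pcancel h g.

Let sum_imset (S : {set J}) (f : I -> F) : \sum_(p in h @: S) f p = \sum_(j in S) f (h j).
Proof. by rewrite big_imset //; apply: in2W; exact: pcan_inj hK. Qed.

Lemma free_fix_imset (S : {set J}) (b : I -> F) : free_fix (h @: S) b = free_fix S (b \o h).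
Proof.
apply/free_fixP/free_fixP => [freeS c cK c0 j jS | freeS c cK c0 _ /imsetP[j jS ->]].
  pose c' p := oapp c 0 (g p).
  have c'h j' : c' (h j') = c j' by rewrite /c' hK.
  rewrite -c'h; apply: freeS; first by move=> _ /imsetP[j' j'S ->]; rewrite c'h cK.
    by rewrite sum_imset -[RHS]c0; apply: eq_bigr => j' _; rewrite c'h.
  exact: imset_f.
apply: (freeS (c \o h)) => // [j' j'S|]; first by apply/cK/imset_f.
by rewrite -[RHS]c0 sum_imset.
Qed.

Lemma span_fix_imset (S : {set J}) (b : I -> F) : span_fix (h @: S) b = span_fix S (b \o h).
Proof.
apply/setP => x; apply/span_fixP/span_fixP => -[c cK ->].
  exists (c \o h); first by move=> j jS; apply/cK/imset_f.
  by rewrite sum_imset.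
exists (fun p => oapp c 0 (g p)); first by move=> _ /imsetP[j jS ->]; rewrite hK cK.
by rewrite sum_imset; apply: eq_bigr => j _; rewrite hK.
Qed.

End Reindex.

Lemma setT_ord_max r : [set: 'I_r.+1] = ord_max |: (lift ord_max @: [set: 'I_r]).
Proof.
apply/setP => i; rewrite !inE; case: (unliftP ord_max i) => [j ->|->]; last by rewrite eqxx.
by rewrite imset_f ?orbT.
Qed.

Lemma free_fix_ord_max r (y : 'I_r.+1 -> F) :
  free_fix setT y = free_fix setT (y \o lift ord_max) &&
                    (y ord_max \notin span_fix setT (y \o lift ord_max)).
Proof.
have notS : ord_max \notin lift ord_max @: [set: 'I_r].
  by apply/negP => /imsetP[j _ /eqP]; rewrite (negbTE (neq_lift _ _)).
by rewrite setT_ord_max free_fixU1 // (free_fix_imset (@liftK _ _)) (span_fix_imset (@liftK _ _)).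
Qed.

Let ext r (yz : {ffun 'I_r -> F} * F) : {ffun 'I_r.+1 -> F} :=
  [ffun i => oapp yz.1 yz.2 (unlift ord_max i)].
Let res r (y : {ffun 'I_r.+1 -> F}) := ([ffun j => y (lift ord_max j)], y ord_max).

Lemma card_free_fix_tupleS r :
  #|[set y : {ffun 'I_r.+1 -> F} | free_fix setT y]| =
  (#|[set y : {ffun 'I_r -> F} | free_fix setT y]| * (#|F| - #|fixed| ^ r))%N.
Proof.
have extK : cancel (@ext r) (@res r).
  by case=> y z; rewrite /res !ffunE unlift_none; congr pair; apply/ffunP => j; rewrite !ffunE liftK.
have resK : cancel (@res r) (@ext r).
  move=> y; apply/ffunP => i; rewrite ffunE.
  by case: unliftP => [j|] ->; rewrite ?liftK ?unlift_none /= ?ffunE.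
rewrite -(card_imset _ (can_inj resK)) (can2_imset_pre _ resK extK).
have freeE (yz : {ffun 'I_r -> F} * F) :
    (ext yz \in [set y : {ffun 'I_r.+1 -> F} | free_fix setT y]) =
                free_fix setT yz.1 && (yz.2 \notin span_fix setT yz.1).
  have Eyz : ext yz \o lift ord_max =1 yz.1 by move=> j; rewrite /= ffunE liftK.
  by rewrite inE free_fix_ord_max (eq_free_fix _ Eyz) (eq_span_fix _ Eyz) ffunE unlift_none.
rewrite (eq_card (B := [set yz : {ffun 'I_r -> F} * F |
                         free_fix setT yz.1 && (yz.2 \notin span_fix setT yz.1)])).
  2: by move=> yz; rewrite !inE -freeE inE.
rewrite (card_pairs_dep (fun y : {ffun 'I_r -> F} => free_fix setT y)
                        (fun y z => z \notin span_fix setT y)).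
rewrite (eq_bigr (fun=> (#|F| - #|fixed| ^ r)%N)) => [|y freey].
  by rewrite sum_nat_const; congr (_ * _); apply: eq_card => y; rewrite inE.
have -> : [set z | z \notin span_fix setT y] = ~: span_fix setT y by apply/setP => z; rewrite !inE.
by rewrite cardsCs setCK card_span_fix // card_ord.
Qed.

Lemma card_free_fix_tuples r :
  (#|[set y : {ffun 'I_r -> F} | free_fix setT y]| : int) =
  \prod_(i < r) ((#|F| : int) - ((#|fixed| ^ i)%N : int)).
Proof.
elim: r => [|r IHr].
  have -> : [set y : {ffun 'I_0 -> F} | free_fix setT y] = setT.
    by apply/setP => y; rewrite !inE; apply/free_fixP => c _ _ [].
  by rewrite big_ord0 cardsT card_ffun card_ord.
rewrite card_free_fix_tupleS big_ord_recr /= -IHr PoszM.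
have [->|/card_gt0P[y]] := posnP #|[set y : {ffun 'I_r -> F} | free_fix setT y]|.
  by rewrite !mul0r.
rewrite inE => freey; rewrite subzn // -(card_ord r) -(card_span_fix freey); exact: max_card.
Qed.

End FixedField.

Lemma eq_free_fix_fixed (F : finFieldType) (s1 s2 : {rmorphism F -> F}) (I : finType)
    (S : {set I}) (b : I -> F) :
  fixed s1 =i fixed s2 -> free_fix s1 S b = free_fix s2 S b.
Proof.
move=> E12; apply/free_fixP/free_fixP => freeS c cK; apply: freeS => p /cK.
  by rewrite E12.
by rewrite -E12.
Qed.

Lemma pchar_nat_expn (R : nzRingType) p a : p \in [pchar R] -> [pchar R].-nat (p ^ a)%N.
Proof.
move=> charRp; rewrite (eq_pnat _ (pcharf_eq charRp)) pnatX pnat_id ?orTb //.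
exact: pcharf_prime charRp.
Qed.

Section FrobeniusPowers.
Variables (F : finFieldType) (p m : nat).
Hypotheses (charFp : p \in [pchar F]) (cardF : #|F| = (p ^ m)%N).
Local Notation frob := (pFrobenius_aut charFp).

Lemma iter_frobE a x : iter a frob x = x ^+ (p ^ a).
Proof. by elim: a => [|a /= ->]; rewrite ?expr1 // pFrobenius_autE -exprM expnSr. Qed.

Lemma m_gt0 : (0 < m)%N.
Proof. by have := finNzRing_gt1 F; rewrite cardF; case: m => //; rewrite expn0. Qed.

Lemma iter_frob_mod a x : iter (a %% m) frob x = iter a frob x.
Proof.
have frobm y : iter m frob y = y by rewrite iter_frobE -cardF expf_card.
rewrite {2}(divn_eq a m) iterD iterM.
by elim: (a %/ m)%N => //= k <-; rewrite frobm.
Qed.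

Lemma eq_iter_frob_mod a b x : a = b %[mod m] -> iter a frob x = iter b frob x.
Proof. by move=> Eab; rewrite -iter_frob_mod Eab iter_frob_mod. Qed.

Lemma fixed_iter_frob_dvd a b :
  (a %| b)%N -> {subset fixed (iter a frob) <= fixed (iter b frob)}.
Proof.
move=> /dvdnP[k ->] x xK; apply/fixedP; rewrite /= iterM; exact: iter_fixed.
Qed.

Lemma fixed_iter_frob_gcd a : fixed (iter a frob) =i fixed (iter (gcdn m a) frob).
Proof.
move=> x; apply/idP/idP => [xK|]; last exact/fixed_iter_frob_dvd/dvdn_gcdr.
have [k _ /dvdnP[l Ekl]] := Bezoutl a m_gt0.
have xkK : iter (k * a) frob x = x.
  by apply/fixedP; apply: fixed_iter_frob_dvd xK; apply: dvdn_mull.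
by apply/fixedP; rewrite /= -{1}xkK -iterD Ekl -iter_frob_mod modnMl.
Qed.

Lemma card_fixed_iter_frob e : (e %| m)%N -> #|fixed (iter e frob)| = (p ^ e)%N.
Proof.
move=> dvd_em; set q := (p ^ e)%N.
have e_gt0 : (0 < e)%N by case: e dvd_em {q} => //; rewrite dvd0n => /eqP m0; have := m_gt0; rewrite m0.
have q_gt1 : (1 < q)%N by rewrite -(expn0 p) ltn_exp2l ?prime_gt1 ?(pcharf_prime charFp).
have charP : p \in [pchar {poly F}] := rmorph_pchar polyC charFp.
have frobB (u v : {poly F}) : (u - v) ^+ q = u ^+ q - v ^+ q.
  by have := exprDn_pchar (u - v) v (pchar_nat_expn e charP); rewrite subrK => ->; rewrite addrK.
pose P : {poly F} := 'X^q - 'X.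
have dvdP k : P %| 'X^(q ^ k) - 'X.
  elim: k => [|k IHk]; first by rewrite expn0 expr1 subrr dvdp0.
  have -> : 'X^(q ^ k.+1) - 'X = ('X^(q ^ k) - 'X) ^+ q + P.
    by rewrite frobB -exprM -expnSr addrA subrK.
  by apply: dvdp_add (dvdpp P); apply: dvdp_exp IHk; apply: ltnW.
have /dvdp_prod_XsubC[msk eqP_prod] : P %| \prod_(x : F) ('X - x%:P).
  by rewrite -finField_genPoly cardF -(divnK dvd_em) mulnC expnM; apply: dvdP.
have sizeP : size P = q.+1 by rewrite size_addl ?size_polyXn ?size_opp ?size_polyX.
have fixedE : fixed (iter e frob) =i mask msk (index_enum F).
  move=> x; rewrite -root_prod_XsubC -(eqp_root eqP_prod) /root /P !hornerE subr_eq0.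
  by rewrite inE /= iter_frobE.
rewrite (eq_card fixedE) (card_uniqP _) ?mask_uniq ?index_enum_uniq //.
by apply: succn_inj; rewrite -(size_prod_XsubC _ id) -(eqp_size eqP_prod).
Qed.

End FrobeniusPowers.

Section SymmetricSolutions.
Variables (F : finFieldType) (u : nat).
Hypothesis char2F : 2 \in [pchar F].

Lemma symmetric_solution (tau : {rmorphism F -> F}) (A : 'I_u -> 'I_u -> F) (y : 'I_u -> F) :
    (forall i l, tau (A i l) = A i l) -> (forall i l, A i l = A l i) ->
  \sum_i ((\sum_l A i l * y l) * tau (y i) + tau (\sum_l A i l * y l) * y i) = 0.
Proof.
move=> tauA symA; rewrite big_split /=.
suff -> : \sum_i tau (\sum_l A i l * y l) * y i = \sum_i (\sum_l A i l * y l) * tau (y i).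
  exact: addrr_pchar2.
under eq_bigr do rewrite rmorph_sum mulr_suml.
rewrite exchange_big /=; apply: eq_bigr => l _; rewrite mulr_suml.
by apply: eq_bigr => i _; rewrite rmorphM tauA symA mulrAC.
Qed.

Variable sigma : {rmorphism F -> F}.

Lemma symmetric_of_iter_eq0 (x y : 'I_u -> F) k0 : free_fix sigma setT y ->
    (forall k, (k0 <= k < k0 + (u + u))%N ->
       \sum_i (x i * iter k sigma (y i) + iter k sigma (x i) * y i) = 0) ->
  exists A : 'I_u -> 'I_u -> F,
    [/\ forall i l, A i l \in fixed sigma, forall i l, A i l = A l i &
        forall i, x i = \sum_l A i l * y l].
Proof.
move=> freey xy0.
pose b (p : 'I_u + 'I_u) := match p with inl l => y l | inr i => x i end.
pose a (p : 'I_u + 'I_u) := match p with inl l => x l | inr i => y i end.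
have freeY : free_fix sigma (inl @: [set: 'I_u]) b.
  have inlK : pcancel inl (fun p : 'I_u + 'I_u => if p is inl l then Some l else None) by [].
  by rewrite (free_fix_imset _ inlK).
have [S [G [sYS freeS GK GE Gdelta]]] := free_fix_coords freeY.
have inlS l : inl l \in S by apply/(subsetP sYS)/imset_f.
have aG0 : {in S, forall p, \sum_q a q * G q p = 0}.
  apply: (@free_fix_moore _ sigma _ (u + u) k0 _ _ b) => // [|k /xy0 xyk].
    by rewrite (leq_trans (max_card _)) // card_sum card_ord.
  transitivity (\sum_q a q * iter k sigma (b q)).
    under eq_bigr do rewrite mulr_suml.
    rewrite exchange_big /=; apply: eq_bigr => q _; rewrite [b q]GE rmorph_sum mulr_sumr.
    apply: eq_bigr => p pS; rewrite rmorphM mulrA; congr (_ * _ * _).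
    by apply/esym/iter_fixed/GK.
  rewrite big_sumType -[RHS]xyk big_split /=; congr (_ + _).
  by apply: eq_bigr => i _; apply: mulrC.
pose A i l := G (inr i) (inl l).
have AK i l : A i l \in fixed sigma by apply: GK.
have Ginr0 j : inr j \in S -> forall i, G (inr i) (inr j) = 0.
  move=> jS; have := aG0 _ jS; rewrite big_sumType /= big1 ?add0r => [yG0 i|l _].
    apply: (elimT (free_fixP _ _ _) freey (fun i => G (inr i) (inr j))); rewrite ?inE //.
      by move=> r _; apply: GK.
    by rewrite -[RHS]yG0; apply: eq_big => [r|r _]; rewrite ?inE // mulrC.
  by rewrite Gdelta // mulr0.
have xE i : x i = \sum_l A i l * y l.
  rewrite [x i](GE (inr i)) (big_sumType _ (mem S)) /= [X in _ + X]big1 ?addr0.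
    by apply: eq_bigl => l; rewrite inlS.
  by move=> j jS; rewrite Ginr0 // mul0r.
have xE' l : x l = \sum_i A i l * y i.
  have := aG0 _ (inlS l); rewrite big_sumType /= (bigD1 l) //= Gdelta // eqxx mulr1.
  rewrite big1 ?addr0 => [/eqP|i il]; last by rewrite Gdelta // inj_eq; [rewrite eq_sym (negbTE il) mulr0 | move=> ? ? []].
  by rewrite addr_eq0 oppr_pchar2 // => /eqP->; apply: eq_bigr => i _; rewrite mulrC.
exists A; split=> // i l.
apply: (@free_fix_coef_inj _ sigma _ _ _ (A ^~ l) (A l) freey) => //.
by under [LHS]eq_bigl do rewrite inE; under [RHS]eq_bigl do rewrite inE; rewrite -xE -xE'.
Qed.

End SymmetricSolutions.

Section Frob2.
Variables (F : finFieldType) (m : nat).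
Hypothesis cardF : #|F| = (2 ^ m)%N.

Lemma char2F : 2 \in [pchar F].
Proof. exact: card_finPcharP cardF _. Qed.

Local Notation frob := (pFrobenius_aut char2F).

Lemma frob2_nat (a : nat) (x : F) : frob2 m a x = iter a frob x.
Proof. by rewrite /frob2 modz_nat absz_nat -(iter_frobE char2F) (iter_frob_mod char2F cardF). Qed.

Lemma eq_frob2_mod (k k' : int) (x : F) : (k = k' %[mod m])%Z -> frob2 m k x = frob2 m k' x.
Proof. by rewrite /frob2 => ->. Qed.

Lemma frob2E (k : int) (x : F) : frob2 m k x = iter `|(k %% m)%Z|%N frob x.
Proof. by rewrite (iter_frobE char2F). Qed.

Lemma frob2D (k k' : int) (x : F) : frob2 m k (frob2 m k' x) = frob2 m (k + k') x.
Proof.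
rewrite [frob2 m k' x]frob2E frob2E -iterD -frob2_nat; apply: eq_frob2_mod.
by rewrite PoszD !gez0_abs ?modz_ge0 -?lt0n ?(m_gt0 cardF) // modzDm.
Qed.

End Frob2.

Section UpperTriangle.
Variables (T : Type) (u : nat).

Definition upper : {set 'I_u * 'I_u} := [set ij : 'I_u * 'I_u | (ij.1 <= ij.2)%N].

Definition symmetrize (g : 'I_u * 'I_u -> T) (i l : 'I_u) : T :=
  if (i <= l)%N then g (i, l) else g (l, i).

Lemma symmetrize_sym g i l : symmetrize g i l = symmetrize g l i.
Proof.
by rewrite /symmetrize; case: ltngtP => // /val_inj->.
Qed.

Lemma card_upper : #|upper| = 'C(u.+1, 2).
Proof.
rewrite -sum1_card (eq_bigl (fun ij : 'I_u * 'I_u => (ij.1 <= ij.2)%N)) => [|ij]; last first.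
  by rewrite inE.
rewrite -(pair_big_dep xpredT (fun i l : 'I_u => (i <= l)%N) (fun _ _ => 1%N)) /=.
have cnt (i : nat) : (\sum_(l < u | i <= l) 1)%N = (u - i)%N.
  by rewrite -[RHS]muln1 -sum_nat_const_nat big_geq_mkord.
under eq_bigr => i _ do rewrite cnt.
rewrite -bin2_sum big_nat_recl // -(big_mkord xpredT (fun i => u - i)%N) big_nat_rev /=.
by apply: eq_big_nat => i /andP[_ lt_iu]; rewrite add0n subKn.
Qed.

End UpperTriangle.

Section Interleave.
Variables (F : finFieldType) (u : nat).

Lemma half_lt (k : 'I_(2 * u)) : (k %/ 2 < u)%N.
Proof. by rewrite ltn_divLR //; have := ltn_ord k; lia. Qed.

Definition interleave (yo : {ffun 'I_u -> F} * {ffun 'I_u -> F}) : {ffun 'I_(2 * u) -> F} :=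
  [ffun k : 'I_(2 * u) => if odd k then yo.1 (Ordinal (half_lt k)) else yo.2 (Ordinal (half_lt k))].

Definition deinterleave (x : {ffun 'I_(2 * u) -> F}) :=
  ([ffun i => xeven x i], [ffun i => xodd x i]).

Lemma interleaveK : cancel interleave deinterleave.
Proof.
case=> y o; congr pair; apply/ffunP => i; rewrite !ffunE /xeven /xodd ffunE /=.
  case: ifP => [_|]; last by rewrite oddD oddM.
  congr (y _); apply: val_inj => /=; lia.
case: ifP => [|_]; first by rewrite oddM.
by congr (o _); apply: val_inj => /=; lia.
Qed.

Lemma deinterleaveK : cancel deinterleave interleave.
Proof.
move=> x; apply/ffunP => k; rewrite ffunE /= !ffunE /xeven /xodd.
by case: ifP => odd_k; congr (x _); apply: val_inj => /=; rewrite [RHS](divn_eq k 2) modn2 odd_k; lia.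
Qed.

End Interleave.

Section Lemma62.
Variables (F : finFieldType) (m n d e s u : nat).
Hypotheses (cardF : #|F| = (2 ^ m)%N) (n_gt0 : (0 < n)%N) (Hm : m = (2 * n)%N)
  (Hen : e = gcdn n d) (Hem : e = gcdn m d) (le_us : (u <= s)%N).

Local Notation frob := (pFrobenius_aut (char2F cardF)).
Local Notation n' := (n %/ e)%N.

Definition expo (j : nat) : int := ((n' : int) - (j : int)) * (d : int).

Definition syst (o y : 'I_u -> F) : bool :=
  [forall j : 'I_s.+1,
    \sum_(i < u) (o i * frob2 m (expo j) (y i) + frob2 m (expo j) (o i) * y i) == 0].

Lemma dvd_m_expo (c : int) : (2 * n' %| c)%Z -> (m %| c * d)%Z.
Proof.
have [en ed] : (e %| n)%N /\ (e %| d)%N by rewrite Hen dvdn_gcdl dvdn_gcdr.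
move: (divnK en) (divnK ed); set n1 := (n %/ e)%N; set d1 := (d %/ e)%N => En Ed.
move=> /dvdzP[q ->]; apply/dvdzP; exists (q * d1); rewrite Hm -En -{1}Ed !PoszM; ring.
Qed.

Lemma iter_eq0_of_syst o y : syst o y -> exists k0, forall k,
  (k0 <= k < k0 + (u + u))%N ->
  \sum_i (o i * iter k (iter d frob) (y i) + iter k (iter d frob) (o i) * y i) = 0.
Proof.
move=> /forallP oy0; exists (n' + 2 * n' * s - s)%N => k /andP[lo hi].
have e_gt0 : (0 < e)%N by rewrite Hen gcdn_gt0 n_gt0.
have n'_gt0 : (0 < n')%N by rewrite divn_gt0 // dvdn_leq // Hen dvdn_gcdl.
have le_k0 : (s <= n' + 2 * n' * s)%N.
  by apply: leq_trans (leq_addl _ _); rewrite leq_pmull // muln_gt0 n'_gt0.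
set t := (k - (n' + 2 * n' * s - s))%N.
have Ek0 : k = (t + (n' + 2 * n' * s - s))%N by rewrite subnK.
have iterE z : iter k (iter d frob) z = frob2 m (k * d)%N z.
  by rewrite (frob2_nat cardF) iterM.
have [le_ts|lt_st] := leqP t s.
  have j_lt : (s - t < s.+1)%N by lia.
  have Ek (z : F) : frob2 m (k * d)%N z = frob2 m (expo (s - t)) z.
    apply: eq_frob2_mod; apply/eqP; rewrite eqz_mod_dvd.
    have -> : ((k * d)%N : int) - expo (s - t) = ((2 * n' * s)%N : int) * d.
      rewrite /expo Ek0 PoszM PoszD -(subzn le_ts) -(subzn le_k0) !PoszD !PoszM; ring.
    by apply: dvd_m_expo; rewrite !PoszM dvdz_mulr.
  rewrite -[RHS](eqP (oy0 (Ordinal j_lt))); apply: eq_bigr => i _.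
  by rewrite !iterE !Ek.
have j_lt : (t - s < s.+1)%N by lia.
have Ek (z : F) : frob2 m (k * d)%N (frob2 m (expo (t - s)) z) = z.
  rewrite (frob2D cardF); transitivity (frob2 m 0%N z); last by rewrite (frob2_nat cardF).
  apply: eq_frob2_mod; apply/eqP; rewrite eqz_mod_dvd subr0.
  have -> : ((k * d)%N : int) + expo (t - s) = ((2 * n' * s.+1)%N : int) * d.
    rewrite /expo Ek0 PoszM PoszD -(subzn (ltnW lt_st)) -(subzn le_k0) !PoszD !PoszM; ring.
  by apply: dvd_m_expo; rewrite !PoszM dvdz_mulr.
have := congr1 (iter k (iter d frob)) (eqP (oy0 (Ordinal j_lt))).
rewrite rmorph0 rmorph_sum => E; rewrite -[RHS]E; apply: eq_bigr => i _.
by rewrite rmorphD !rmorphM /= !iterE !Ek addrC.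
Qed.

Lemma syst_of_symmetric (A : 'I_u -> 'I_u -> F) (o y : 'I_u -> F) :
    (forall i l, A i l \in fixed (iter e frob)) -> (forall i l, A i l = A l i) ->
    (forall i, o i = \sum_l A i l * y l) -> syst o y.
Proof.
move=> AK symA oE; apply/forallP => j; apply/eqP.
under eq_bigr do rewrite oE.
set a := `|(expo j %% m)%Z|%N.
have e_a : (e %| a)%N.
  have e_m : (e %| m%:Z)%Z by rewrite dvdzE !absz_nat Hem dvdn_gcdl.
  suff : (e %| expo j %% m)%Z by rewrite dvdzE absz_nat.
  have -> : (expo j %% m)%Z = expo j - (expo j %/ m)%Z * m.
    by rewrite {2}(divz_eq (expo j) m) addrAC subrr add0r.
  by rewrite rpredB ?dvdz_mull // dvdzE !absz_nat Hem dvdn_gcdr.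
under eq_bigr do rewrite !(frob2E cardF) -/a.
by apply: (symmetric_solution (char2F cardF)) => // i l; apply/fixedP/(fixed_iter_frob_dvd e_a).
Qed.

Local Notation K := (fixed (iter e frob)).

Lemma fixed_iter_d : fixed (iter d frob) =i K.
Proof. by move=> c; rewrite (fixed_iter_frob_gcd _ cardF) -Hem. Qed.

Lemma upper_onP (g : {ffun 'I_u * 'I_u -> F}) :
  reflect ({in upper u, forall ij, g ij \in K} /\ forall ij, ij \notin upper u -> g ij = 0)
          (g \in pffun_on 0 (upper u) K).
Proof.
apply: (iffP pffun_onP) => [[sub im] | [gK g0]]; split.
- by move=> ij ij_up; apply/im/image_f.
- by move=> ij; apply: contraNeq => gij; apply/(subsetP sub); rewrite inE.
- by apply/subsetP => ij; rewrite inE; apply: contraR => /g0->.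
- by move=> _ /imageP[ij ij_up ->]; apply: gK.
Qed.

Lemma card_syst_fiber (y : 'I_u -> F) : free_fix (iter e frob) setT y ->
  #|[set o : {ffun 'I_u -> F} | syst o y]| = (#|K| ^ 'C(u.+1, 2))%N.
Proof.
move=> freey; pose Phi (g : {ffun 'I_u * 'I_u -> F}) := [ffun i => \sum_l symmetrize g i l * y l].
have symK g i l : g \in pffun_on 0 (upper u) K -> symmetrize g i l \in K.
  by case/upper_onP => gK _; rewrite /symmetrize; case: leqP => [il|/ltnW li]; apply: gK; rewrite inE.
have -> : [set o : {ffun 'I_u -> F} | syst o y] = Phi @: pffun_on 0 (upper u) K.
  apply/setP => o; rewrite inE; apply/idP/imsetP => [/iter_eq0_of_syst[k0 oy0] | [g gP ->]].
    have freey_d : free_fix (iter d frob) setT y by rewrite (eq_free_fix_fixed _ _ fixed_iter_d).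
    have [A [AK symA oE]] := symmetric_of_iter_eq0 (char2F cardF) freey_d oy0.
    exists [ffun ij : 'I_u * 'I_u => if (ij.1 <= ij.2)%N then A ij.1 ij.2 else 0].
      apply/upper_onP; split=> ij; rewrite inE ffunE; last by move/negbTE->.
      by move=> ->; rewrite -fixed_iter_d.
    apply/ffunP => i; rewrite !ffunE oE; apply: eq_bigr => l _; congr (_ * _).
    by rewrite /symmetrize !ffunE /=; case: leqP => [//|/ltnW->]; rewrite symA.
  apply: (syst_of_symmetric (A := symmetrize g)) => [i l|i l|i]; rewrite ?ffunE //.
    exact: symK.
  exact: symmetrize_sym.
rewrite card_in_imset ?card_pffun_on ?card_upper // => g g' gP g'P /ffunP EPhi.
have Esym i l : symmetrize g i l = symmetrize g' i l.
  apply: (@free_fix_coef_inj _ _ _ _ _ (symmetrize g i) (symmetrize g' i) freey) => [r _|r _||]; rewrite ?symK ?inE //.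
  under eq_bigl do rewrite inE; under [RHS]eq_bigl do rewrite inE.
  by have := EPhi i; rewrite !ffunE.
apply/ffunP => -[i l]; case: (boolP ((i, l) \in upper u)) => [|ij_up].
  by rewrite inE /= => il; have := Esym i l; rewrite /symmetrize il.
by case/upper_onP: gP => _ g0; case/upper_onP: g'P => _ g'0; rewrite g0 ?g'0.
Qed.

Lemma eq_syst o o' y y' : o =1 o' -> y =1 y' -> syst o y = syst o' y'.
Proof.
by move=> Eo Ey; apply: eq_forallb => j; congr (_ == _); apply: eq_bigr => i _; rewrite Eo Ey.
Qed.

Lemma indep_subE (x : {ffun 'I_(2 * u) -> F}) :
  indep_sub e x = free_fix (iter e frob) setT (xeven x).
Proof.
apply: eq_forallb => c; congr (_ ==> _); last by apply: eq_forallb => i; rewrite inE.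
congr (_ && _); first by apply: eq_forallb => i; rewrite !inE /= (iter_frobE (char2F cardF)).
by congr (_ == _); apply: eq_bigl => i; rewrite inE.
Qed.

Lemma card_V0 : #|V0 F m n d e s u| =
  (#|[set y : {ffun 'I_u -> F} | free_fix (iter e frob) setT y]| * #|K| ^ 'C(u.+1, 2))%N.
Proof.
rewrite -(card_imset _ (can_inj (@deinterleaveK F u))).
rewrite (can2_imset_pre _ (@deinterleaveK F u) (@interleaveK F u)).
rewrite (eq_card (B := [set yo : {ffun 'I_u -> F} * {ffun 'I_u -> F} |
                         free_fix (iter e frob) setT yo.1 && syst yo.2 yo.1])).
  rewrite (card_pairs_dep (fun y : {ffun 'I_u -> F} => free_fix (iter e frob) setT y)
                          (fun y (o : {ffun 'I_u -> F}) => syst o y)) -sum_nat_const.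
  by apply: eq_big => [y|y freey]; rewrite ?inE // card_syst_fiber.
move=> yo; rewrite !inE andbC.
have [Ey Eo] : xeven (interleave yo) =1 yo.1 /\ xodd (interleave yo) =1 yo.2.
  by split=> i; have := interleaveK yo; case: yo => y o [/ffunP/(_ i) + /ffunP/(_ i)]; rewrite !ffunE.
rewrite indep_subE (eq_free_fix _ _ Ey); congr (_ && _); exact: eq_syst Eo Ey.
Qed.

End Lemma62.

Theorem lemma6p2 (F : finFieldType) (m n d e s u : nat) :
  #|F| = (2 ^ m)%N ->
  (0 < m)%N -> (0 < n)%N -> (0 < d)%N -> (0 < e)%N ->
  m = (2 * n)%N -> e = gcdn n d -> e = gcdn m d ->
  (2 <= u)%N -> (u <= s)%N ->
  (#|V0 F m n d e s u| : int) =
    ((2 ^ (e * u * (u + 1) %/ 2))%N : int) *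
    \prod_(i < u) (((2 ^ m)%N : int) - ((2 ^ (e * i))%N : int)).
Proof.
move=> cardF _ n_gt0 _ _ Hm Hen Hem _ le_us.
have cardK := card_fixed_iter_frob (char2F cardF) cardF (_ : (e %| m)%N).
rewrite (card_V0 cardF n_gt0 Hm Hen Hem le_us) PoszM mulrC card_free_fix_tuples cardF.
rewrite cardK; last by rewrite Hem dvdn_gcdl.
congr (_ * _).
  rewrite -expnM bin2 -divn2 muln_divA /=; last by rewrite dvdn2 oddM /= andNb.
  by rewrite addn1 (mulnC u.+1) mulnA.
by apply: eq_bigr => i _; rewrite -expnM.
Qed.
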